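(* Let $G=(V,E)$ be a temporal network, let $\pi$ be an ordering of $V$, and let $\delta\ge 0$. Let $e=(u,v,t)\in E$ be a temporal edge with $\pi(u)<\pi(v)$, and let $w\in N^{+}_{\pi}(u)$ be a vertex adjacent to $v$ in $G_S$. Put $L_2=E_{u,w}$ and $L_3=E_{v,w}$. Let $L_{12}[e]$ be the first edge of $L_2$ (in sorted order) whose timestamp is at least $t(e)$, and for $f\in L_2$ let $L_{23}[f]$ be the first edge of $L_3$ whose timestamp is at least $t(f)$. Then $e$ forms at least one $\delta$-temporal triangle with $w$ if and only if $L_{12}[e]$ and $L_{23}[L_{12}[e]]$ exist and $$t(e)\le t(L_{12}[e])\le t(L_{23}[L_{12}[e]])\le t(e)+\delta.$$
   Context: A temporal network $G=(V,E)$ is a finite multiset of temporal edges $(x,y,t)$ with $x\neq y\in V$ and timestamp $t=t(e)\in\mathbb{R}$; the edge goes from $x$ to $y$, and parallel edges (in both directions) are allowed. For distinct $x,y\in V$, $E_{x,y}$ denotes the list of temporal edges from $x$ to $y$, sorted by increasing timestamp. $G_S$ is the underlying static graph: the simple undirected graph on $V$ with $\{x,y\}$ an edge iff there is at least one temporal edge between $x$ and $y$ (in either direction); $N(x)$ is the neighbourhood of $x$ in $G_S$. For an ordering $\pi$ of $V$, $N^{+}_{\pi}(x)=\{y\in N(x):\pi(x)<\pi(y)\}$. For $\delta\ge 0$, a temporal edge $e=(a,b,t)$ forms a $\delta$-temporal triangle with a vertex $c$ if there exist temporal edges $(a,c,t_2)$ and $(b,c,t_3)$ in $E$ with $t\le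 t_2\le t_3\le t+\delta$. *)

From HB Require Import structures.
From mathcomp Require Import all_boot all_order all_algebra.
Set Implicit Arguments. Unset Strict Implicit. Unset Printing Implicit Defensive.
Import Order.TTheory GRing.Theory Num.Theory.
Local Open Scope ring_scope.

Section Temporal.
Variables (V : finType) (R : realFieldType).

Definition tedge := (V * V * R)%type.
Definition tsrc (e : tedge) : V := e.1.1.
Definition tdst (e : tedge) : V := e.1.2.
Definition ttime (e : tedge) : R := e.2.

Definition temporal_network (E : seq tedge) : Prop :=
  forall e, e \in E -> tsrc e != tdst e.

Definition Exy (E : seq tedge) (x y : V) : seq tedge :=
  sort (fun a b : tedge => ttime a <= ttime b)
       [seq f <- E | (tsrc f == x) && (tdst f == y)].

Definition adjS (E : seq tedge) (x y : V) : bool :=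
  (x != y) &&
  has (fun f : tedge => ((tsrc f == x) && (tdst f == y)) ||
                        ((tsrc f == y) && (tdst f == x))) E.

Definition ordering (pi : V -> nat) : Prop := injective pi.

Definition Nplus (E : seq tedge) (pi : V -> nat) (x y : V) : bool :=
  adjS E x y && (pi x < pi y)%N.

Definition first_ge (L : seq tedge) (t : R) : option tedge :=
  ohead [seq f <- L | t <= ttime f].

Definition forms_triangle (E : seq tedge) (delta : R) (e : tedge) (c : V) : Prop :=
  exists t2 t3 : R,
    (tsrc e, c, t2) \in E /\ (tdst e, c, t3) \in E /\
    ttime e <= t2 /\ t2 <= t3 /\ t3 <= ttime e + delta.

End Temporal.

(* The greedy choice is optimal. Given a triangle with times t(e) <= t2 <= t3 <= t(e) + delta,
   the first edge f of L2 at or after t(e) satisfies t(f) <= t2 <= t3, so the first edge g of L3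
   at or after t(f) exists and satisfies t(g) <= t3 <= t(e) + delta. Conversely, f and g are
   themselves the two edges of a triangle. *)
From HB Require Import structures.
From mathcomp Require Import all_boot all_order all_algebra.
Set Implicit Arguments. Unset Strict Implicit. Unset Printing Implicit Defensive.
Import Order.TTheory GRing.Theory Num.Theory.
Local Open Scope ring_scope.

Section EdgeLists.
Variables (V : finType) (R : realFieldType).
Implicit Types (E L : seq (tedge V R)) (f x : tedge V R) (t : R) (a b : V).

Definition le_time (f g : tedge V R) : bool := ttime f <= ttime g.

Lemma le_time_trans : transitive le_time.
Proof. by move=> ? ? ?; apply: le_trans. Qed.

Lemma le_time_total : total le_time.
Proof. by move=> ? ?; apply: le_total. Qed.

Lemma first_geP L t f :
  first_ge L t = Some f -> f \in L /\ t <= ttime f.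
Proof.
rewrite /first_ge; case Hs: [seq g <- L | t <= ttime g] => [//|g s] /= [<-].
by have := mem_head g s; rewrite -Hs mem_filter => /andP[].
Qed.

Lemma first_ge_le L t x :
  sorted le_time L -> x \in L -> t <= ttime x ->
  exists2 f, first_ge L t = Some f & ttime f <= ttime x.
Proof.
move=> sL xL tx; rewrite /first_ge.
have sS : sorted le_time [seq g <- L | t <= ttime g].
  exact: sorted_filter le_time_trans _ _ sL.
have xS : x \in [seq g <- L | t <= ttime g] by rewrite mem_filter tx xL.
move: sS xS; case: [seq g <- L | t <= ttime g] => [//|f s] /= sS xS.
exists f => //; move: xS; rewrite inE => /predU1P[-> //|xs].
exact: (allP (order_path_min le_time_trans sS)).
Qed.

Lemma Exy_sorted E a b : sorted le_time (Exy E a b).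
Proof. exact: sort_sorted le_time_total _. Qed.

Lemma mem_Exy E a b f :
  (f \in Exy E a b) = (f \in E) && (tsrc f == a) && (tdst f == b).
Proof. by rewrite mem_sort mem_filter andbC andbA. Qed.

Lemma mem_Exy_triple E a b t : ((a, b, t) \in Exy E a b) = ((a, b, t) \in E).
Proof. by rewrite mem_Exy /tsrc /tdst /= !eqxx !andbT. Qed.

Lemma Exy_triple E a b f : f \in Exy E a b -> (a, b, ttime f) \in E.
Proof.
by case: f => [[a' b'] t]; rewrite mem_Exy /tsrc /tdst /= => /andP[/andP[fE /eqP<-] /eqP<-].
Qed.

End EdgeLists.

Section GreedyTriangle.
Variables (V : finType) (R : realFieldType).
Variables (E : seq (tedge V R)) (delta : R) (e : tedge V R) (w : V).

Lemma triangle_first_ge :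
  forms_triangle E delta e w ->
  exists f g : tedge V R,
    first_ge (Exy E (tsrc e) w) (ttime e) = Some f /\
    first_ge (Exy E (tdst e) w) (ttime f) = Some g /\
    ttime e <= ttime f /\ ttime f <= ttime g /\ ttime g <= ttime e + delta.
Proof.
move=> [t2 [t3 [in2 [in3 [le_e2 [le_23 le_3d]]]]]].
have in2L : (tsrc e, w, t2) \in Exy E (tsrc e) w by rewrite mem_Exy_triple.
have in3L : (tdst e, w, t3) \in Exy E (tdst e) w by rewrite mem_Exy_triple.
have [f Hf le_f2] := first_ge_le (Exy_sorted E _ _) in2L le_e2.
have [g Hg le_g3] := first_ge_le (Exy_sorted E _ _) in3L (le_trans le_f2 le_23).
exists f, g; split=> //; split=> //; split; first exact: (first_geP Hf).2.
by split; [exact: (first_geP Hg).2 | exact: le_trans le_g3 le_3d].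
Qed.

Lemma first_ge_triangle f g :
  first_ge (Exy E (tsrc e) w) (ttime e) = Some f ->
  first_ge (Exy E (tdst e) w) (ttime f) = Some g ->
  ttime e <= ttime f -> ttime f <= ttime g -> ttime g <= ttime e + delta ->
  forms_triangle E delta e w.
Proof.
move=> /first_geP[fL _] /first_geP[gL _] le_ef le_fg le_gd.
by exists (ttime f), (ttime g); do !split=> //; apply: Exy_triple.
Qed.

End GreedyTriangle.

Theorem theorem3p1 (V : finType) (R : realFieldType) (E : seq (tedge V R))
  (pi : V -> nat) (delta : R) (e : tedge V R) (w : V) :
  temporal_network E -> ordering pi -> 0 <= delta ->
  e \in E -> (pi (tsrc e) < pi (tdst e))%N ->
  Nplus E pi (tsrc e) w -> adjS E (tdst e) w ->
  forms_triangle E delta e w <->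
  (exists f g : tedge V R,
     first_ge (Exy E (tsrc e) w) (ttime e) = Some f /\
     first_ge (Exy E (tdst e) w) (ttime f) = Some g /\
     ttime e <= ttime f /\ ttime f <= ttime g /\ ttime g <= ttime e + delta).
Proof.
move=> _ _ _ _ _ _ _; split; first exact: triangle_first_ge.
by move=> [f [g [Hf [Hg [le_ef [le_fg le_gd]]]]]]; apply: (first_ge_triangle Hf Hg).
Qed.
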